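(* Let $\Lambda$ be a row-finite $k$-graph with no sources, and let $\mu,\nu\in\Lambda$ with $s(\mu)=s(\nu)$. Then $\mu\sim\nu$ if and only if $\mathrm{MCE}(\mu\tau,\nu\tau)\ne\emptyset$ for every $\tau\in s(\mu)\Lambda$.
   Context: $k$-graph notation: countable category $\Lambda$, degree functor $d:\Lambda\to\mathbb N^k$ with unique factorisation, $\Lambda^n=d^{-1}(n)$, vertices $\Lambda^0$, range/source $r,s$, $v\Lambda^n=\{\lambda\in\Lambda^n:r(\lambda)=v\}$. Row-finite: every $v\Lambda^n$ is finite; no sources: every $v\Lambda^n$ is nonempty. $\mathrm{MCE}(\mu,\nu)=\{\lambda\in\Lambda^{d(\mu)\vee d(\nu)}:\lambda=\mu\alpha=\nu\beta\text{ for some }\alpha,\beta\}$. A filter is a nonempty $S\subseteq\Lambda$ with (F1) $\lambda\Lambda\cap S\ne\emptyset\Rightarrow\lambda\in S$ and (F2) $\mu,\nu\in S\Rightarrow\mathrm{MCE}(\mu,\nu)\cap S\ne\emptyset$; $r(S)$ denotes the unique vertex in $S$. An ultrafilter is a filter with $S\cap\Lambda^n\ne\emptyset$ for all $n\in\mathbb N^k$. For an ultrafilter $S$ and $\mu$ with $s(\mu)=r(S)$, $\ell_\mu(S)=\{\eta\in\Lambda:\eta\Lambda\cap\mu S\ne\emptyset\}$ (again an ultrafilter). For $\mu,\nu$ with $s(\mu)=s(\nu)$, $\mu\sim\nu$ means $\ell_\mu(S)=\ell_\nu(S)$ for every ultrafilter $S$ with $r(S)=s(\mu)$. *)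

From Stdlib Require Lists.List.
From mathcomp Require Import all_boot.
Set Implicit Arguments. Unset Strict Implicit. Unset Printing Implicit Defensive.

Definition NN (k : nat) := {ffun 'I_k -> nat}.
Definition NNadd k (m n : NN k) : NN k := [ffun i => m i + n i].
Definition NNjoin k (m n : NN k) : NN k := [ffun i => maxn (m i) (n i)].
Definition NN0 k : NN k := [ffun _ => 0].

(* Composition [kcomp] is total as a
   function but only meaningful (and only constrained) on composable pairs,
   i.e. when [s mu = r nu]; [kcomp mu nu] is the composite "mu nu". *)
Record kgraph (k : nat) := KGraph {
  Obj : Type;
  Mor : Type;
  rng : Mor -> Obj;
  src : Mor -> Obj;
  idm : Obj -> Mor;
  kcomp : Mor -> Mor -> Mor;
  deg : Mor -> NN k;
  mor_countable : exists f : Mor -> nat, injective f;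
  rng_id : forall v, rng (idm v) = v;
  src_id : forall v, src (idm v) = v;
  rng_comp : forall m n, src m = rng n -> rng (kcomp m n) = rng m;
  src_comp : forall m n, src m = rng n -> src (kcomp m n) = src n;
  comp_id_l : forall m, kcomp (idm (rng m)) m = m;
  comp_id_r : forall m, kcomp m (idm (src m)) = m;
  comp_assoc : forall a b c, src a = rng b -> src b = rng c ->
      kcomp (kcomp a b) c = kcomp a (kcomp b c);
  deg_id : forall v, deg (idm v) = NN0 k;
  deg_comp : forall m n, src m = rng n -> deg (kcomp m n) = NNadd (deg m) (deg n);
  unique_fact : forall l (m n : NN k), deg l = NNadd m n ->
      exists! p : Mor * Mor, [/\ deg p.1 = m, deg p.2 = n,
                                 src p.1 = rng p.2 & l = kcomp p.1 p.2]
}.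

Section KG.
Variables (k : nat) (L : kgraph k).
Local Notation Mor := (Mor L).
Local Notation r := (@rng k L).
Local Notation s := (@src k L).
Local Notation d := (@deg k L).
Local Notation kcomp := (@kcomp k L).

Definition row_finite : Prop :=
  forall (v : Obj L) (n : NN k), exists l : list Mor,
    forall lam, r lam = v -> d lam = n -> Stdlib.Lists.List.In lam l.

Definition no_sources : Prop :=
  forall (v : Obj L) (n : NN k), exists lam, r lam = v /\ d lam = n.

Definition MCE (mu nu : Mor) (lam : Mor) : Prop :=
  d lam = NNjoin (d mu) (d nu) /\
  exists alpha beta, [/\ s mu = r alpha, lam = kcomp mu alpha,
                         s nu = r beta & lam = kcomp nu beta].

Definition is_filter (S : Mor -> Prop) : Prop :=
  [/\ exists lam, S lam,
      (forall lam, (exists alpha, s lam = r alpha /\ S (kcomp lam alpha)) -> S lam)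
    & (forall mu nu, S mu -> S nu -> exists lam, MCE mu nu lam /\ S lam)].

Definition is_ultrafilter (S : Mor -> Prop) : Prop :=
  is_filter S /\ forall n : NN k, exists lam, S lam /\ d lam = n.

(* r(S) = v : the (unique) vertex of the filter S is v *)
Definition range_filter (S : Mor -> Prop) (v : Obj L) : Prop := S (idm v).

Definition ell (mu : Mor) (S : Mor -> Prop) (eta : Mor) : Prop :=
  exists alpha x, [/\ s eta = r alpha, S x, s mu = r x &
                      kcomp eta alpha = kcomp mu x].

Definition kequiv (mu nu : Mor) : Prop :=
  forall S, is_ultrafilter S -> range_filter S (s mu) ->
    forall eta, ell mu S eta <-> ell nu S eta.

End KG.

From mathcomp Require Import all_boot.
From mathcomp Require Import zify.
From Stdlib Require Import ClassicalEpsilon.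
Set Implicit Arguments. Unset Strict Implicit. Unset Printing Implicit Defensive.

(* Everything is phrased through the prefix order: [prefix a c] means c = a p.
   Unique factorisation makes the prefixes of a fixed path c totally ordered
   by degree ([prefix_of_deg_le]), so any two prefixes of c have a minimal
   common extension which is again a prefix of c ([MCE_below]).

   (<=) If every MCE(mu tau, nu tau) is nonempty, take eta in l_mu(S), i.e.
   eta <= mu x with x in S.  Extend x inside S to some y of large degree
   ([ultrafilter_extend]); then eta <= mu y <= lam with lam in
   MCE(mu y, nu y), and comparing degrees gives eta <= nu y, so eta lies in
   l_nu(S).  By symmetry l_mu(S) = l_nu(S).

   (=>) Given tau, no sources lets us extend tau to an infinite ray
   tau = t_0 <= t_1 <= ... of unbounded degree ([unbounded_ray]); its
   prefixes form an ultrafilter S with r(S) = s(mu) ([ray_ultrafilter]).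
   Since mu tau lies in l_mu(S) = l_nu(S), both mu tau and nu tau are
   prefixes of some nu t_j, hence have a common extension. *)

Section PrefixOrder.
Variables (k : nat) (L : kgraph k).
Local Notation Mor := (Mor L).
Local Notation r := (@rng k L).
Local Notation s := (@src k L).
Local Notation d := (@deg k L).
Local Notation kc := (@kcomp k L).

Definition prefix (a c : Mor) : Prop := exists p, s a = r p /\ c = kc a p.

Definition dle (m n : NN k) : Prop := forall i, m i <= n i.

Lemma prefix_refl (a : Mor) : prefix a a.
Proof. by exists (idm (s a)); rewrite rng_id comp_id_r. Qed.

Lemma prefix_trans (a b c : Mor) : prefix a b -> prefix b c -> prefix a c.
Proof.
move=> [p [hp ->]] [q [hq ->]]; rewrite src_comp // in hq.
by exists (kc p q); rewrite rng_comp // comp_assoc.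
Qed.

Lemma prefix_rng (a c : Mor) : prefix a c -> r c = r a.
Proof. by move=> [p [hp ->]]; rewrite rng_comp. Qed.

Lemma prefix_comp (mu x y : Mor) :
  s mu = r x -> prefix x y -> prefix (kc mu x) (kc mu y).
Proof.
move=> h [p [hp ->]]; exists p.
by rewrite src_comp // comp_assoc.
Qed.

Lemma prefix_deg (a c : Mor) : prefix a c -> dle (d a) (d c).
Proof. by move=> [p [hp ->]] i; rewrite deg_comp // ffunE leq_addr. Qed.

Lemma prefix_of_deg (c : Mor) (n : NN k) :
  dle n (d c) -> exists a, prefix a c /\ d a = n.
Proof.
move=> hn.
have e : d c = NNadd n [ffun i => d c i - n i].
  by apply/ffunP => i; rewrite !ffunE subnKC.
have [[a b] [[/= da _ hab ->] _]] := unique_fact e.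
by exists a; split => //; exists b.
Qed.

(* Unique factorisation: prefixes of a common path are ordered by degree. *)
Lemma prefix_of_deg_le (a b c : Mor) :
  prefix a c -> prefix b c -> dle (d a) (d b) -> prefix a b.
Proof.
move=> [p [hp ec]] [q [hq ec']] hab.
have [b1 [[b2 [h12 eb]] db1]] := prefix_of_deg hab.
have hs2 : s b2 = r q by rewrite -hq eb src_comp.
have e : d c = NNadd (d a) (d p) by rewrite ec deg_comp.
have ec2 : c = kc b1 (kc b2 q) by rewrite ec' eb comp_assoc.
have [[x y] [_ uniq_xy]] := unique_fact e.
have fact_ap : (x, y) = (a, p) by apply: uniq_xy.
have fact_b1 : (x, y) = (b1, kc b2 q).
  apply: uniq_xy; split => //=; last by rewrite rng_comp.
  apply/ffunP => i; have := congr1 (fun f : NN k => f i) e.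
  by rewrite {1}ec2 deg_comp ?rng_comp // db1 !ffunE => /addnI.
rewrite fact_ap in fact_b1; case: fact_b1 => -> _.
by exists b2.
Qed.

Lemma MCE_below (a b c : Mor) :
  prefix a c -> prefix b c -> exists lam, MCE a b lam /\ prefix lam c.
Proof.
move=> pa pb.
have hj : dle (NNjoin (d a) (d b)) (d c).
  by move=> i; rewrite ffunE geq_max (prefix_deg pa) (prefix_deg pb).
have [lam [hl dl]] := prefix_of_deg hj.
have [al [h1 h2]] : prefix a lam.
  by apply: (prefix_of_deg_le pa hl) => i; rewrite dl ffunE leq_maxl.
have [be [h3 h4]] : prefix b lam.
  by apply: (prefix_of_deg_le pb hl) => i; rewrite dl ffunE leq_maxr.
by exists lam; split => //; split => //; exists al, be.
Qed.

Lemma MCE_sym (a b lam : Mor) : MCE a b lam -> MCE b a lam.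
Proof.
move=> [dl [al [be [h1 h2 h3 h4]]]]; split; last by exists be, al.
by rewrite dl; apply/ffunP => i; rewrite !ffunE maxnC.
Qed.

Lemma ellP (mu : Mor) (S : Mor -> Prop) (eta : Mor) :
  ell mu S eta <-> exists x, [/\ S x, s mu = r x & prefix eta (kc mu x)].
Proof.
split.
  by move=> [al [x [h1 Sx h2 e]]]; exists x; split => //; exists al; rewrite e.
by move=> [x [Sx h [al [h1 e]]]]; exists al, x; split => //; rewrite -e.
Qed.

End PrefixOrder.

Section Ultrafilters.
Variables (k : nat) (L : kgraph k).
Local Notation Mor := (Mor L).
Local Notation r := (@rng k L).
Local Notation s := (@src k L).
Local Notation d := (@deg k L).
Local Notation kc := (@kcomp k L).

Lemma ultrafilter_extend (S : Mor -> Prop) (x : Mor) (n : NN k) :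
  is_ultrafilter S -> S x -> exists y, [/\ S y, prefix x y & dle n (d y)].
Proof.
move=> [[_ _ S_MCE] S_deg] Sx.
have [z [Sz dz]] := S_deg n.
have [y [[dy [c [_ [hc ey _ _]]]] Sy]] := S_MCE _ _ Sx Sz.
exists y; split => //; first by exists c.
by move=> i; rewrite dy -dz ffunE leq_maxr.
Qed.

Lemma ell_sub_of_MCE (mu nu : Mor) (S : Mor -> Prop) (eta : Mor) :
  s mu = s nu ->
  (forall tau, r tau = s mu -> exists lam, MCE (kc mu tau) (kc nu tau) lam) ->
  is_ultrafilter S -> ell mu S eta -> ell nu S eta.
Proof.
move=> hs H US /ellP [x [Sx hx eta_mux]].
have [y [Sy xy dy]] := ultrafilter_extend (NNadd (d x) (d mu)) US Sx.
have hy : r y = s mu by rewrite (prefix_rng xy).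
have [lam [_ [a [b [ha el hb el']]]]] := H y hy.
have eta_lam : prefix eta lam.
  apply: (prefix_trans eta_mux); apply: (prefix_trans (prefix_comp hx xy)).
  by exists a.
have nuy_lam : prefix (kc nu y) lam by exists b.
apply/ellP; exists y; split => //; first by rewrite -hs.
apply: (prefix_of_deg_le eta_lam nuy_lam) => i.
have := prefix_deg eta_mux i; have := dy i.
by rewrite !deg_comp -?hs // !ffunE; lia.
Qed.

Lemma ray_ultrafilter (t : nat -> Mor) :
  (forall i j, i <= j -> prefix (t i) (t j)) ->
  (forall n, exists j, dle n (d (t j))) ->
  is_ultrafilter (fun lam => exists j, prefix lam (t j)).
Proof.
move=> t_mono t_unb; split; [split|].
- by exists (t 0), 0; apply: prefix_refl.
- move=> lam [al [h [j hj]]]; exists j; apply: prefix_trans hj; by exists al.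
- move=> a b [i hi] [j hj].
  have hi' := prefix_trans hi (t_mono _ _ (leq_maxl i j)).
  have hj' := prefix_trans hj (t_mono _ _ (leq_maxr i j)).
  have [lam [hm hl]] := MCE_below hi' hj'.
  by exists lam; split => //; exists (maxn i j).
- move=> n; have [j hj] := t_unb n.
  have [lam [hl dl]] := prefix_of_deg hj.
  by exists lam; split => //; exists j.
Qed.

(* Without sources, every path extends to an increasing chain of paths of
   unbounded degree: append an edge of degree (1,...,1) at each step. *)
Lemma unbounded_ray (tau : Mor) : no_sources L ->
  exists t : nat -> Mor, [/\ t 0 = tau,
    forall i j, i <= j -> prefix (t i) (t j)
  & forall n, exists j, dle n (d (t j))].
Proof.
move=> ns.
pose one : NN k := [ffun _ => 1].
have [e he] : exists e : Obj L -> Mor, forall v, r (e v) = v /\ d (e v) = one.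
  exists (fun v => proj1_sig (constructive_indefinite_description _ (ns v one))).
  by move=> v; exact: proj2_sig (constructive_indefinite_description _ (ns v one)).
pose t j := iter j (fun x => kc x (e (s x))) tau.
have t_step j : prefix (t j) (t j.+1) by exists (e (s (t j))); rewrite (he _).1.
have t_deg j i : d (t j) i = d tau i + j.
  elim: j => [|j IH]; first by rewrite addn0.
  by rewrite /= deg_comp ?(he _).1 // ffunE IH (he _).2 ffunE addn1 addnS.
exists t; split => //.
- move=> i j /subnKC <-; elim: (j - i) => [|m IH]; first by rewrite addn0; apply: prefix_refl.
  by rewrite addnS; apply: prefix_trans IH (t_step _).
- move=> n; exists (\sum_(i < k) n i) => i; rewrite t_deg.
  by apply: leq_trans (leq_addl _ _); rewrite (bigD1 i) //= leq_addr.
Qed.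

Lemma MCE_of_kequiv (mu nu tau : Mor) :
  no_sources L -> s mu = s nu -> kequiv mu nu -> r tau = s mu ->
  exists lam, MCE (kc mu tau) (kc nu tau) lam.
Proof.
move=> ns hs heq htau.
have [t [t0 t_mono t_unb]] := unbounded_ray tau ns.
have US := ray_ultrafilter t_mono t_unb.
have rS : range_filter (fun lam => exists j, prefix lam (t j)) (s mu).
  by exists 0; rewrite t0; exists tau; rewrite src_id -htau comp_id_l.
have tau_S : exists j, prefix tau (t j) by exists 0; rewrite t0; apply: prefix_refl.
have mutau_ell : ell mu (fun lam => exists j, prefix lam (t j)) (kc mu tau).
  by apply/ellP; exists tau; split; [exact: tau_S | rewrite htau | apply: prefix_refl].
have /ellP [y [[j hj] hy mutau_nuy]] := (heq _ US rS _).1 mutau_ell.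
have nutau_nuy : prefix (kc nu tau) (kc nu (t j)).
  rewrite -{1}t0; apply: (prefix_comp _ (t_mono 0 j (leq0n j))).
  by rewrite t0 -hs htau.
have [lam [hm _]] := MCE_below (prefix_trans mutau_nuy (prefix_comp hy hj)) nutau_nuy.
by exists lam.
Qed.

End Ultrafilters.

Theorem mainTheorem20 (k : nat) (L : kgraph k) (mu nu : Mor L) :
  row_finite L -> no_sources L -> src mu = src nu ->
  (kequiv mu nu <->
   forall tau : Mor L, rng tau = src mu ->
     exists lam, MCE (kcomp mu tau) (kcomp nu tau) lam).
Proof.
move=> _ ns hs; split=> [heq tau | H S US _ eta]; first exact: MCE_of_kequiv.
have H' tau : rng tau = src nu -> exists lam, MCE (kcomp nu tau) (kcomp mu tau) lam.
  by rewrite -hs => /H [lam /MCE_sym]; exists lam.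
by split; [apply: ell_sub_of_MCE H US | apply: ell_sub_of_MCE H' US].
Qed.
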